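(* Suppose all agents are strategic and have complete and perfect information. For any categorial sequential allocation mechanism $f_\mathcal O$, any agent $j$, and any profile, the rank (in $R_j$) of the bundle allocated to agent $j$ in the subgame-perfect Nash equilibrium is at most $n^p+1-\prod_{i=1}^{p}k_{j,i}$.
   Context: Basic categorized domain: $n$ agents, $p$ categories $D_i=\{1,\ldots,n\}$ of indivisible items, bundles $\mathfrak D=D_1\times\cdots\times D_p$; each agent $j$ has a linear order $R_j$ over $\mathfrak D$. The rank of a bundle in $R_j$ is its position (top $=1$, bottom $=n^p$). CSAM $f_\mathcal O$: given a linear order $\mathcal O$ over $\{1,\ldots,n\}\times\{1,\ldots,p\}$, in rounds $t=1,\ldots,np$, if the $t$-th element of $\mathcal O$ is $(j,i)$ then agent $j$ chooses an item $d_{j,i}$ from the items of $D_i$ not yet chosen; all choices are observed by all agents; agent $j$ finally receives $(d_{j,1},\ldots,d_{j,p})$. With strategic agents with complete and perfect information, this is an extensive-form game in which each agent's preference over outcomes is her linear order $R_j$ over her final bundle; its subgame-perfect Nash equilibrium (computed by backward induction) is unique since preferences are linear orders. $k_{j,i}$ denotes the number of items of $D_i$ still available right before agent $j$ chooses from $D_i$, i.e. $n$ minus the number of agents who choose from $D_i$ before $j$ in $\mathcal O$. *)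

From mathcomp Require Import all_boot.
Set Implicit Arguments. Unset Strict Implicit. Unset Printing Implicit Defensive.

Section CSAM.
Variables (n p : nat).

(* An item of any category D_i = {1..n} is an element of 'I_n;
   a bundle (d_1,...,d_p) is a finite function 'I_p -> 'I_n. *)
Definition bundle := {ffun 'I_p -> 'I_n}.

(* The order O over agents x categories, as the sequence of its elements
   (first element = round 1). *)
Definition is_order (s : seq ('I_n * 'I_p)) := uniq s /\ forall x, x \in s.

(* A linear order R_j over bundles: [R x y] means "x is (weakly) ranked
   above y", i.e. x R_j y. *)
Definition linear_order (R : rel bundle) :=
  [/\ reflexive R, antisymmetric R, transitive R & total R].

(* Rank of b in R: its position, top = 1 (number of bundles weakly above b). *)
Definition rank (R : rel bundle) (b : bundle) : nat := #|[set b' | R b' b]|.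

Variable s : seq ('I_n * 'I_p).

(* A history is the sequence of items chosen in rounds 1..t. *)
Definition mover (h : seq 'I_n) : option ('I_n * 'I_p) := ohead (drop (size h) s).

Definition chosen (h : seq 'I_n) (i : 'I_p) : seq 'I_n :=
  [seq x.1 | x <- zip h s & x.2.2 == i].

Definition available (h : seq 'I_n) (d : 'I_n) : bool :=
  if mover h is Some (_, i) then d \notin chosen h i else false.

Definition legal (h : seq 'I_n) : Prop :=
  forall t (d : 'I_n), t < size h -> available (take t h) (nth d h t).

(* A (pure) strategy profile, with complete and perfect information:
   the mover's choice as a function of the whole history. *)
Definition strategy := seq 'I_n -> 'I_n.

Definition valid (sigma : strategy) : Prop :=
  forall h, legal h -> size h < size s -> available h (sigma h).

Definition play (sigma : strategy) (h : seq 'I_n) : seq 'I_n :=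
  iter (size s - size h) (fun h => rcons h (sigma h)) h.

Definition bundle_of (j : 'I_n) (h : seq 'I_n) : bundle :=
  [ffun i => nth j h (index (j, i) s)].

Definition moves_of (a : 'I_n) (h : seq 'I_n) : bool :=
  if mover h is Some (a', _) then a' == a else false.

Variable R : 'I_n -> rel bundle.

Definition strictly_prefers (a : 'I_n) (x y : bundle) : bool :=
  R a x y && ~~ R a y x.

Definition SPNE (sigma : strategy) : Prop :=
  valid sigma /\
  forall h, legal h -> size h <= size s ->
  forall (a : 'I_n) (sigma' : strategy), valid sigma' ->
    (forall h', ~~ moves_of a h' -> sigma' h' = sigma h') ->
    ~~ strictly_prefers a (bundle_of a (play sigma' h)) (bundle_of a (play sigma h)).

(* k_{j,i}: number of items of D_i still available when j chooses from D_i. *)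
Definition k (j : 'I_n) (i : 'I_p) : nat :=
  n - count (fun x : 'I_n * 'I_p => x.2 == i) (take (index (j, i) s) s).

End CSAM.

From mathcomp Require Import all_boot zify boolp.
Set Implicit Arguments. Unset Strict Implicit. Unset Printing Implicit Defensive.

(* Backward induction yields a subgame-perfect equilibrium. For the bound,
   consider the bundles agent j can secure by deviating unilaterally from an
   equilibrium: at her round for category i any of the k_{j,i} items still
   available may be taken, and different choices lead to bundles that differ
   in category i, so at least prod_i k_{j,i} bundles are reachable. Subgame
   perfection at the root says that none of them is strictly preferred to the
   equilibrium bundle, so all of them rank at or below it. *)

Lemma count_zip_snd (S T : Type) (P : pred T) (h : seq S) (t : seq T) :
  count (fun x => P x.2) (zip h t) = count P (take (size h) t).
Proof. by elim: h t => [|x h IH] [|y t] //=; rewrite IH. Qed.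

Lemma card_sum_fibers (T : finType) (m : nat) (A : {set T}) (f : T -> 'I_m) :
  #|A| = \sum_(d < m) #|[set x in A | f x == d]|.
Proof.
rewrite -sum1_card (partition_big f predT) //=.
by apply: eq_bigr => d _; rewrite -sum1_card; apply: eq_bigl => x; rewrite !inE.
Qed.

Section Histories.
Variables (n p : nat) (s : seq ('I_n * 'I_p)).

Lemma history_ind (P : seq 'I_n -> Prop) :
  (forall h, size s <= size h -> P h) ->
  (forall h, size h < size s -> (forall d, P (rcons h d)) -> P h) ->
  forall h, P h.
Proof.
move=> Pend Pstep h; move Em: (size s - size h) => m.
elim: m h Em => [|m IH] h Em; first by apply: Pend; lia.
by apply: Pstep => [|d]; [lia | apply: IH; rewrite size_rcons; lia].
Qed.

Lemma play_terminal (sg : strategy n) h : size s <= size h -> play s sg h = h.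
Proof. by rewrite /play => H; have -> : size s - size h = 0 by lia. Qed.

Lemma play_rcons (sg : strategy n) h :
  size h < size s -> play s sg h = play s sg (rcons h (sg h)).
Proof.
move=> H; rewrite /play size_rcons.
have -> : size s - size h = (size s - (size h).+1).+1 by lia.
by rewrite iterSr.
Qed.

Lemma eq_play (sg1 sg2 : strategy n) h :
  (forall h', size h <= size h' -> sg1 h' = sg2 h') -> play s sg1 h = play s sg2 h.
Proof.
elim/history_ind: h => [h Hend|h Hlt IH] E; first by rewrite !play_terminal.
rewrite (play_rcons sg1) // (play_rcons sg2) // E // IH // => h'.
by rewrite size_rcons => /ltnW; apply: E.
Qed.

Lemma play_prefix (sg : strategy n) h : exists t, play s sg h = h ++ t.
Proof.
elim/history_ind: h => [h Hend|h Hlt IH].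
  by exists [::]; rewrite play_terminal ?cats0.
rewrite play_rcons //; have [t ->] := IH (sg h).
by exists (sg h :: t); rewrite cat_rcons.
Qed.

Lemma legal_nil : legal s [::].
Proof. by []. Qed.

Lemma legal_rcons h d : legal s h -> available s h d -> legal s (rcons h d).
Proof.
move=> Hl Ha t d0; rewrite size_rcons ltnS leq_eqVlt -cats1 => /orP[/eqP ->|Ht].
  by rewrite take_size_cat // nth_cat ltnn subnn.
by rewrite takel_cat ?(ltnW Ht) // nth_cat Ht; apply: Hl.
Qed.

Lemma mover_ltn h : size h < size s -> exists x, mover s h = Some x.
Proof.
rewrite /mover; case E: (drop (size h) s) => [|x t] H; last by exists x.
by have := size_drop (size h) s; rewrite E /=; lia.
Qed.

Lemma mover_mem h x : mover s h = Some x -> x \in s.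
Proof.
rewrite /mover; case E: (drop (size h) s) => [|y t] //= [<-].
by apply: (mem_drop (n0 := size h)); rewrite E mem_head.
Qed.

Lemma available_size h d : available s h d -> size h < size s.
Proof.
rewrite /available /mover; case: ltnP => // H.
by rewrite drop_oversize.
Qed.

Lemma mover_eq_index h x :
  uniq s -> x \in s -> (mover s h == Some x) = (index x s == size h).
Proof.
move=> Hu Hx; rewrite /mover; case: (ltnP (size h) (size s)) => H.
  rewrite (drop_nth x H) /=; apply/eqP/eqP => [[<-]|<-].
    exact: index_uniq.
  by rewrite nth_index.
have : index x s < size h by rewrite (leq_trans _ H) ?index_mem.
by rewrite drop_oversize // ltn_neqAle => /andP[/negbTE ->].
Qed.

Lemma index_mover h x : uniq s -> mover s h = Some x -> index x s = size h.
Proof.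
by move=> Hu Hm; apply/eqP; rewrite -mover_eq_index ?Hm ?(mover_mem Hm).
Qed.

Lemma size_chosen h i :
  size (chosen s h i) = count (fun x : 'I_n * 'I_p => x.2 == i) (take (size h) s).
Proof. by rewrite size_map size_filter (count_zip_snd (fun x => x.2 == i)). Qed.

Lemma count_category i :
  is_order s -> count (fun x : 'I_n * 'I_p => x.2 == i) s = n.
Proof.
case=> Hu Hs.
have Hperm : perm_eq s (enum [set: 'I_n * 'I_p]).
  by apply: uniq_perm => // [|x]; rewrite ?enum_uniq // mem_enum inE Hs.
rewrite (permP Hperm) -size_filter.
have -> : [seq x <- enum [set: 'I_n * 'I_p] | x.2 == i]
          = enum (setX [set: 'I_n] [set i]).
  rewrite /enum_mem -filter_predI; apply: eq_filter => x.
  by rewrite /= !inE andbT; case: x.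
by rewrite -cardE cardsX cardsT cards1 card_ord muln1.
Qed.

Lemma k_gt0 j i : is_order s -> 0 < k s j i.
Proof.
move=> Ho; have Hidx : index (j, i) s < size s by rewrite index_mem Ho.2.
set P := fun x : 'I_n * 'I_p => x.2 == i.
have Hsplit : count P s = count P (take (index (j, i) s) s)
                          + count P (drop (index (j, i) s) s).
  by rewrite -count_cat cat_take_drop.
have Hown : 0 < count P (drop (index (j, i) s) s).
  by rewrite (drop_nth (j, i) Hidx) nth_index ?Ho.2 //= {1}/P eqxx.
have := count_category i Ho; rewrite /k -/P; lia.
Qed.

Lemma k_le_card_available h a i :
  uniq s -> mover s h = Some (a, i) -> k s a i <= #|[pred d | available s h d]|.
Proof.
move=> Hu Hm; rewrite /k (index_mover Hu Hm) -size_chosen.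
set c := chosen s h i.
have -> : #|[pred d | available s h d]| = #|[predC [pred d | d \in c]]|.
  by apply: eq_card => d; rewrite /available Hm !inE.
have Hsize : #|[pred d | d \in c]| <= size c.
  by apply: leq_trans (card_size _); apply/subset_leq_card/subsetP => d; rewrite !inE.
by rewrite -{1}(card_ord n) -(cardC [pred d | d \in c]) leq_subLR leq_add2r.
Qed.

End Histories.

Section Rank.
Variables (n p : nat) (R : rel (bundle n p)).
Hypothesis R_linear : linear_order R.

Lemma leq_rank x y : (rank R x <= rank R y) = R x y.
Proof.
case: R_linear => Hrefl _ Htr Htot; apply/idP/idP => [|Hxy]; last first.
  apply/subset_leq_card/subsetP => b; rewrite !inE => Hbx.
  exact: (Htr _ _ _ Hbx Hxy).
apply: contraLR => Hxy; rewrite -ltnNge; apply/proper_card/properP; split.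
  have Hyx : R y x by move: (Htot x y); rewrite (negbTE Hxy).
  by apply/subsetP => b; rewrite !inE => Hby; apply: (Htr _ _ _ Hby Hyx).
by exists x; rewrite !inE ?Hrefl.
Qed.

Lemma rank_add_card x (B : {set bundle n p}) :
  {in B, forall b, R x b} -> rank R x + #|B| <= n ^ p + 1.
Proof.
case: R_linear => _ Hanti _ _ HB; set A := [set b | R b x].
have HI : #|A :&: B| <= 1.
  rewrite -(cards1 x); apply/subset_leq_card/subsetP => b.
  by rewrite !inE => /andP[Hbx HbB]; apply/eqP/Hanti; rewrite Hbx HB.
have HU : #|A :|: B| <= n ^ p.
  by apply: leq_trans (max_card _) _; rewrite card_ffun !card_ord.
by rewrite /rank -/A -cardsUI leq_add.
Qed.

End Rank.

Section BackwardInduction.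
Variables (n p : nat) (s : seq ('I_n * 'I_p)) (R : 'I_n -> rel (bundle n p)).
Variable d0 : 'I_n.
Hypothesis s_order : is_order s.
Hypothesis R_linear : forall a, linear_order (R a).

(* [f d] is the terminal history that choosing [d] at [h] leads to. *)
Definition best_choice (f : 'I_n -> seq 'I_n) (h : seq 'I_n) : 'I_n :=
  if mover s h is Some (a, _) then
    if [pick d | available s h d] is Some d1 then
      [arg min_(d < d1 | available s h d) rank (R a) (bundle_of s a (f d))]
    else d0
  else d0.

Fixpoint bi_outcome m h :=
  if m is m'.+1 then
    bi_outcome m' (rcons h (best_choice (fun d => bi_outcome m' (rcons h d)) h))
  else h.

Definition bi_strategy : strategy n :=
  fun h => best_choice (fun d => bi_outcome (size s - size h).-1 (rcons h d)) h.

Lemma best_choiceP f h a i : mover s h = Some (a, i) ->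
  available s h (best_choice f h) /\
  forall d, available s h d ->
    rank (R a) (bundle_of s a (f (best_choice f h)))
      <= rank (R a) (bundle_of s a (f d)).
Proof.
move=> Hm; rewrite /best_choice Hm; case: pickP => [d1 Hd1|Hnone].
  by case: arg_minnP.
have := leq_trans (k_gt0 a i s_order) (k_le_card_available s_order.1 Hm).
by rewrite (eq_card0 Hnone).
Qed.

Lemma play_bi_strategy h : play s bi_strategy h = bi_outcome (size s - size h) h.
Proof.
elim/(@history_ind _ _ s): h => [h Hend|h Hlt IH].
  by rewrite play_terminal //; have -> : size s - size h = 0 by lia.
rewrite play_rcons // IH size_rcons subnS /bi_strategy.
by have [m ->] : exists m, size s - size h = m.+1 by exists (size s - size h).-1; lia.
Qed.

Lemma bi_strategy_valid : valid s bi_strategy.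
Proof.
move=> h _ /mover_ltn [[a i] Hm]; exact: (best_choiceP _ Hm).1.
Qed.

Lemma bi_strategy_optimal h : legal s h ->
  forall a (sg : strategy n), valid s sg ->
  (forall h', ~~ moves_of s a h' -> sg h' = bi_strategy h') ->
  R a (bundle_of s a (play s bi_strategy h)) (bundle_of s a (play s sg h)).
Proof.
elim/(@history_ind _ _ s): h => [h Hend|h Hlt IH] Hl a sg Hv Hdev.
  by rewrite !play_terminal //; case: (R_linear a).
have [[b i] Hm] := mover_ltn Hlt.
rewrite (play_rcons bi_strategy) // (play_rcons sg) //.
case: (eqVneq b a) => [Eba|Hba]; last first.
  rewrite Hdev /moves_of ?Hm ?Hba //.
  by apply: IH => //; apply: legal_rcons (bi_strategy_valid Hl Hlt).
subst b; case: (R_linear a) => _ _ Htr _.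
apply: (Htr _ _ _ _ (IH _ (legal_rcons Hl (Hv h Hl Hlt)) a sg Hv Hdev)).
have Eplay d : play s bi_strategy (rcons h d)
               = bi_outcome (size s - size h).-1 (rcons h d).
  by rewrite play_bi_strategy size_rcons subnS.
rewrite -leq_rank // !Eplay.
exact: (best_choiceP (fun d => bi_outcome _ (rcons h d)) Hm).2 _ (Hv h Hl Hlt).
Qed.

Lemma bi_strategy_SPNE : SPNE s R bi_strategy.
Proof.
split; first exact: bi_strategy_valid.
move=> h Hl _ a sg Hv Hdev; rewrite /strictly_prefers negb_and negbK.
by rewrite bi_strategy_optimal ?orbT.
Qed.

End BackwardInduction.

Section Reachable.
Variables (n p : nat) (s : seq ('I_n * 'I_p)) (j : 'I_n) (sigma : strategy n).
Hypothesis s_order : is_order s.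

Definition deviation (sg : strategy n) : Prop :=
  valid s sg /\ forall h, ~~ moves_of s j h -> sg h = sigma h.

Definition reachable (h : seq 'I_n) (b : bundle n p) : Prop :=
  exists2 sg, deviation sg & bundle_of s j (play s sg h) = b.

Definition reach (h : seq 'I_n) : {set bundle n p} := [set b | `[< reachable h b >]].

(* Rounds are numbered from 0, so [j] picks from category [i] in round
   [index (j, i) s]. *)
Definition remaining_k (t : nat) : nat :=
  \prod_(i < p | t <= index (j, i) s) k s j i.

Lemma remaining_k_terminal t : size s <= t -> remaining_k t = 1.
Proof.
move=> Ht; apply: big_pred0 => i; apply/negbTE; rewrite -ltnNge.
by apply: leq_trans Ht; rewrite index_mem s_order.2.
Qed.

Lemma remaining_kS h a i : mover s h = Some (a, i) ->
  remaining_k (size h) = (if a == j then k s j i else 1) * remaining_k (size h).+1.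
Proof.
move=> Hm; rewrite /remaining_k (bigID (fun i' => index (j, i') s == size h)) /=.
congr (_ * _); last first.
  by apply: eq_bigl => i'; rewrite ltn_neqAle andbC eq_sym.
have Eidx i' : (size h <= index (j, i') s) && (index (j, i') s == size h)
               = (a == j) && (i' == i).
  rewrite andb_idl => [|/eqP -> //].
  rewrite -mover_eq_index ?s_order.1 ?s_order.2 // Hm.
  by rewrite (inj_eq (@Some_inj _)) xpair_eqE (eq_sym i).
rewrite (eq_bigl _ _ Eidx); case: eqP => _ /=.
  exact: big_pred1_eq.
exact: big_pred0_eq.
Qed.

Lemma bundle_of_play_rcons sg h d i : mover s h = Some (j, i) ->
  bundle_of s j (play s sg (rcons h d)) i = d.
Proof.
move=> Hm; have [t ->] := play_prefix s sg (rcons h d).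
rewrite /bundle_of ffunE (index_mover s_order.1 Hm).
by rewrite nth_cat size_rcons ltnSn nth_rcons ltnn eqxx.
Qed.

Lemma reachable_rcons h d b : available s h d ->
  (~~ moves_of s j h -> d = sigma h) -> reachable (rcons h d) b -> reachable h b.
Proof.
move=> Hd Hsigma [sg [Hv Hdev] <-].
pose sg' : strategy n := fun h' => if h' == h then d else sg h'.
exists sg'; first split.
- by move=> h' Hl' Hs'; rewrite /sg'; case: eqP => [->|_] //; apply: Hv.
- move=> h' Hh'; rewrite /sg'; case: eqP => [E|_]; last exact: Hdev.
  by rewrite Hsigma // -E.
rewrite (play_rcons sg') ?(available_size Hd) //.
have -> : sg' h = d by rewrite /sg' eqxx.
congr bundle_of; apply: eq_play => h'; rewrite /sg'.
by case: eqP => // ->; rewrite size_rcons ltnn.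
Qed.

Lemma card_reach_own h i : mover s h = Some (j, i) ->
  \sum_(d < n | available s h d) #|reach (rcons h d)| <= #|reach h|.
Proof.
move=> Hm; rewrite (card_sum_fibers (reach h) (fun b => b i)) big_mkcond /=.
apply: leq_sum => d _; case: ifP => // Hd.
apply/subset_leq_card/subsetP => b; rewrite !inE => /asboolP Hb.
apply/andP; split.
  by apply/asboolP; apply: reachable_rcons Hd _ Hb; rewrite /moves_of Hm eqxx.
by case: Hb => sg _ <-; rewrite bundle_of_play_rcons.
Qed.

Hypothesis sigma_valid : valid s sigma.

Lemma card_reach h : legal s h -> remaining_k (size h) <= #|reach h|.
Proof.
elim/(@history_ind _ _ s): h => [h Hend|h Hlt IH] Hl.
  rewrite remaining_k_terminal //; apply/card_gt0P.
  exists (bundle_of s j (play s sigma h)); rewrite inE; apply/asboolP.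
  by exists sigma.
have [[a i] Hm] := mover_ltn Hlt; rewrite (remaining_kS Hm).
case: (eqVneq a j) => [Eaj|Haj]; last first.
  have Hd := sigma_valid Hl Hlt.
  have := IH _ (legal_rcons Hl Hd); rewrite size_rcons mul1n => /leq_trans; apply.
  apply/subset_leq_card/subsetP => b; rewrite !inE => /asboolP Hb.
  by apply/asboolP; apply: reachable_rcons Hd _ Hb.
subst a; apply: leq_trans (card_reach_own Hm).
apply: (@leq_trans (\sum_(d < n | available s h d) remaining_k (size h).+1)).
  by rewrite sum_nat_const leq_mul2r (k_le_card_available s_order.1 Hm) orbT.
by apply: leq_sum => d Hd; have := IH d (legal_rcons Hl Hd); rewrite size_rcons.
Qed.

Lemma SPNE_reachable (R : 'I_n -> rel (bundle n p)) h b :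
  SPNE s R sigma -> linear_order (R j) -> legal s h -> size h <= size s ->
  reachable h b -> R j (bundle_of s j (play s sigma h)) b.
Proof.
move=> [_ Hopt] [_ _ _ Htot] Hl Hs [sg Hdev <-].
have := Hopt h Hl Hs j sg Hdev.1 Hdev.2.
rewrite /strictly_prefers negb_and negbK => /orP[Hnot|//].
by move: (Htot (bundle_of s j (play s sigma h)) (bundle_of s j (play s sg h)));
  rewrite (negbTE Hnot) orbF.
Qed.

End Reachable.

Theorem proposition6 (n p : nat) (s : seq ('I_n * 'I_p))
  (R : 'I_n -> rel (bundle n p)) (j : 'I_n) :
  is_order s -> (forall a, linear_order (R a)) ->
  (exists sigma, SPNE s R sigma) /\
  (forall sigma, SPNE s R sigma ->
     rank (R j) (bundle_of s j (play s sigma [::]))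
       <= n ^ p + 1 - \prod_(i < p) k s j i).
Proof.
move=> Ho HL; split; first by exists (bi_strategy s R j); apply: bi_strategy_SPNE.
move=> sigma Hsp.
have Hreach : \prod_(i < p) k s j i <= #|reach s j sigma [::]|.
  have := card_reach j Ho Hsp.1 (legal_nil s).
  by rewrite /remaining_k (eq_bigl _ _ (fun i => leq0n (index (j, i) s))).
have Hbelow : {in reach s j sigma [::],
                forall b, R j (bundle_of s j (play s sigma [::])) b}.
  by move=> b; rewrite inE => /asboolP; apply: SPNE_reachable.
have := rank_add_card (HL j) Hbelow; lia.
Qed.
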